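(* There exist absolute constants $A, C > 0$ such that for all integers $1 \le k \le d$, the Greedy algorithm (defined in the context), viewed as a map $c$ sending each finite point set $P \subset \mathbb{R}^d$ to its output $c(P)$, is an $\alpha$-composable core-set of size $k$ for the determinant maximization problem with parameter $k$, where $\alpha = A\cdot C^{k^2}$. That is, $|c(P)|\le k$ for every $P$, and for every integer $m \ge 1$ and all finite point sets $P_1,\dots,P_m \subset \mathbb{R}^d$, $$\mathrm{MAXDET}_k\Big(\bigcup_{i=1}^m c(P_i)\Big) \ge \frac{1}{\alpha}\,\mathrm{MAXDET}_k\Big(\bigcup_{i=1}^m P_i\Big).$$
   Context: For a finite set $S=\{v_1,\dots,v_k\}\subset\mathbb{R}^d$, let $M_S$ be the $k\times d$ matrix whose rows are the points of $S$; $\det(M_SM_S^\top)$ equals the square of the $k$-dimensional volume $\mathrm{VOL}(S)$ of the parallelepiped spanned by $S$. For a finite $P\subset\mathbb{R}^d$, $\mathrm{MAXDET}_k(P)=\max_{S\subseteq P,\,|S|=k}\det(M_SM_S^\top)$. For a set $C$ of points, $\langle C\rangle$ denotes its linear span, and $\mathrm{dist}(p,\mathcal{H})$ is the Euclidean distance from point $p$ to subspace $\mathcal{H}$. The Greedy algorithm on input $P$ and $k$: start with $\mathcal{C}=\emptyset$; for $k$ iterations, add to $\mathcal{C}$ a point $\arg\max_{p\in P}\mathrm{dist}(p,\langle\mathcal{C}\rangle)$; output $\mathcal{C}$. A map $c$ from point sets to subsets of themselves is an $\alpha$-composable core-set for determinant maximization if the displayed inequality holds for every collection $P_1,\dots,P_m$;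 it has size $t$ if $|c(P)|\le t$ for all $P$. *)

From HB Require Import structures.
From mathcomp Require Import all_boot all_order all_algebra.
From mathcomp Require Import boolp classical_sets reals Rstruct.
From Stdlib Require Rdefinitions.
Set Implicit Arguments. Unset Strict Implicit. Unset Printing Implicit Defensive.
Import Order.TTheory GRing.Theory Num.Theory.
Local Open Scope ring_scope.
Local Open Scope classical_set_scope.

Notation R := Rdefinitions.R.
Notation pt d := ('rV[R]_d).

Definition eucl_norm d (v : pt d) : R := Num.sqrt (\sum_(j < d) v 0 j ^+ 2).

Definition mx_of d (S : seq (pt d)) : 'M[R]_(size S, d) :=
  \matrix_(i < size S, j < d) (nth 0 S i) 0 j.

Definition dist d (p : pt d) (C : seq (pt d)) : R :=
  inf [set eucl_norm (p - v) | v in [set v : pt d | (v <= mx_of C)%MS]].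

(* s is a possible output sequence of Greedy on input P and k (with
   arbitrary tie-breaking): at step i, the point s_i belongs to P and
   maximizes dist(., <{s_0,...,s_(i-1)}>) over P.  If P is empty, the
   argmax is undefined and the output is empty. *)
Definition is_greedy d (P : seq (pt d)) (k : nat) (s : seq (pt d)) : Prop :=
  size s = (if P is [::] then 0%N else k) /\
  forall i : nat, (i < size s)%N ->
    nth 0 s i \in P /\
    forall q, q \in P -> dist q (take i s) <= dist (nth 0 s i) (take i s).

(* MAXDET_k(P) = max over k-element subsets S of P of det(M_S M_S^T);
   subsets of the (finite) point set P are encoded by injective maps
   'I_k -> indices of undup P.  Empty max (fewer than k points) is 0. *)
Definition MAXDET d (k : nat) (P : seq (pt d)) : R :=
  let s := undup P in
  \big[Num.max/0]_(f : {ffun 'I_k -> 'I_(size s)} | injectiveb f)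
     \det ((\matrix_(i < k, j < d) (nth 0 s (f i)) 0 j) *m
           (\matrix_(i < k, j < d) (nth 0 s (f i)) 0 j)^T).

From mathcomp Require Import all_boot all_order all_algebra.
From mathcomp Require Import boolp classical_sets reals Rstruct.
From Stdlib Require Rdefinitions.
From mathcomp Require Import ring lra.
Import Order.TTheory GRing.Theory Num.Theory.
Set Implicit Arguments. Unset Strict Implicit. Unset Printing Implicit Defensive.
Local Open Scope ring_scope.

(* Let g_0, ..., g_(k-1) be the output of Greedy on P and u_i the component of
   g_i orthogonal to g_0, ..., g_(i-1).  Greedy makes |u_i| non-increasing and
   expands every q in P as q = sum_i c_i u_i + r with |c_i| <= 1 and
   |r| <= |u_(k-1)|.  Fix a span H of k - 1 vectors.  By induction
   dist(u_i, H) <= 2^i D, where D = max_t dist(g_t, H); and since some nonzero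
   combination of the k orthogonal vectors u_i is orthogonal to H,
   |u_(k-1)| <= k 2^(k-1) D.  Hence dist(q, H) <= k 2^k D.  As
   det(M M^T) = dist(row, span of the other rows)^2 * det of the rest, replacing
   the rows of any k x d matrix over the union of the P_i one at a time by
   greedy points loses at most a factor (k 2^k)^(2k) <= 16^(k^2). *)

Section Dot.
Variable d : nat.
Implicit Types x y z : 'rV[R]_d.

Definition dot x y : R := (x *m y^T) 0 0.
Definition norm2 x : R := dot x x.

Lemma dotE x y : dot x y = \sum_j x 0 j * y 0 j.
Proof. by rewrite /dot mxE; apply: eq_bigr => j _; rewrite mxE. Qed.

Lemma dotC x y : dot x y = dot y x.
Proof. by rewrite !dotE; apply: eq_bigr => j _; rewrite mulrC. Qed.

Lemma dotDl x y z : dot (x + y) z = dot x z + dot y z.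
Proof. by rewrite /dot mulmxDl mxE. Qed.

Lemma dotBl x y z : dot (x - y) z = dot x z - dot y z.
Proof. by rewrite /dot mulmxBl !mxE. Qed.

Lemma dotZl a x z : dot (a *: x) z = a * dot x z.
Proof. by rewrite /dot -scalemxAl mxE. Qed.

Lemma dot_suml (I : Type) (s : seq I) (F : I -> 'rV_d) z :
  dot (\sum_(i <- s) F i) z = \sum_(i <- s) dot (F i) z.
Proof. by rewrite /dot mulmx_suml summxE. Qed.

Lemma dotDr x y z : dot z (x + y) = dot z x + dot z y.
Proof. by rewrite dotC dotDl !(dotC z). Qed.

Lemma dotBr x y z : dot z (x - y) = dot z x - dot z y.
Proof. by rewrite dotC dotBl !(dotC z). Qed.

Lemma dotZr a x z : dot z (a *: x) = a * dot z x.
Proof. by rewrite dotC dotZl dotC. Qed.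

Lemma dot_sumr (I : Type) (s : seq I) (F : I -> 'rV_d) z :
  dot z (\sum_(i <- s) F i) = \sum_(i <- s) dot z (F i).
Proof. by rewrite dotC dot_suml; apply: eq_bigr => i _; rewrite dotC. Qed.

Lemma dot0r z : dot z 0 = 0.
Proof. by rewrite /dot trmx0 mulmx0 mxE. Qed.

Lemma mulmx_trE m p (X : 'M[R]_(m, d)) (Y : 'M[R]_(p, d)) a b :
  (X *m Y^T) a b = dot (row a X) (row b Y).
Proof. by rewrite dotE mxE; apply: eq_bigr => j _; rewrite !mxE. Qed.

Lemma norm2_ge0 x : 0 <= norm2 x.
Proof. by rewrite /norm2 dotE sumr_ge0 // => j _; rewrite -expr2 sqr_ge0. Qed.

Lemma norm2_eq0 x : (norm2 x == 0) = (x == 0).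
Proof.
apply/idP/eqP => [|->]; last by rewrite /norm2 dot0r.
rewrite /norm2 dotE psumr_eq0 => [/allP x0|j _]; last by rewrite -expr2 sqr_ge0.
apply/rowP => j; rewrite mxE; apply/eqP.
by rewrite -sqrf_eq0 expr2 (eqP (x0 j (mem_index_enum j))).
Qed.

Lemma norm2D x y : norm2 (x + y) = norm2 x + 2 * dot x y + norm2 y.
Proof. by rewrite /norm2 !dotDl !dotDr (dotC y x); ring. Qed.

Lemma norm2B x y : norm2 (x - y) = norm2 x - 2 * dot x y + norm2 y.
Proof. by rewrite /norm2 !dotBl !dotBr (dotC y x); ring. Qed.

Lemma norm2Z a x : norm2 (a *: x) = a ^+ 2 * norm2 x.
Proof. by rewrite /norm2 dotZl dotZr mulrA expr2. Qed.

Lemma norm2_pyth x y : dot x y = 0 -> norm2 (x + y) = norm2 x + norm2 y.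
Proof. by move=> xy; rewrite norm2D xy mulr0 addr0. Qed.

Lemma cauchy_schwarz x y : dot x y ^+ 2 <= norm2 x * norm2 y.
Proof.
have [->|y0] := eqVneq y 0; first by rewrite /norm2 !dot0r expr0n mulr0.
have := norm2_ge0 (norm2 y *: x - dot x y *: y).
rewrite norm2B !norm2Z dotZl dotZr /norm2 => ge0.
have y_gt0 : 0 < dot y y by rewrite lt_def norm2_eq0 y0 norm2_ge0.
by rewrite -(@ler_pM2r _ (dot y y)) //; nra.
Qed.

Lemma eucl_normE x : eucl_norm x = Num.sqrt (norm2 x).
Proof.
by rewrite /eucl_norm /norm2 dotE; congr Num.sqrt; apply: eq_bigr => j _; rewrite expr2.
Qed.

Lemma eucl_norm_ge0 x : 0 <= eucl_norm x.
Proof. exact: sqrtr_ge0. Qed.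

Lemma sqr_eucl_norm x : eucl_norm x ^+ 2 = norm2 x.
Proof. by rewrite eucl_normE sqr_sqrtr // norm2_ge0. Qed.

Lemma ler_eucl_norm x y : (eucl_norm x <= eucl_norm y) = (norm2 x <= norm2 y).
Proof. by rewrite !eucl_normE ler_sqrt // norm2_ge0. Qed.

Lemma eucl_norm0 : eucl_norm (0 : 'rV[R]_d) = 0.
Proof. by rewrite eucl_normE /norm2 dot0r sqrtr0. Qed.

Lemma eucl_normZ a x : eucl_norm (a *: x) = `|a| * eucl_norm x.
Proof. by rewrite !eucl_normE norm2Z sqrtrM ?sqr_ge0 // sqrtr_sqr. Qed.

Lemma eucl_normN x : eucl_norm (- x) = eucl_norm x.
Proof. by rewrite -scaleN1r eucl_normZ normrN1 mul1r. Qed.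

Lemma dot_le_eucl_norm x y : `|dot x y| <= eucl_norm x * eucl_norm y.
Proof.
rewrite !eucl_normE -sqrtrM ?norm2_ge0 // -sqrtr_sqr.
exact/ler_wsqrtr/cauchy_schwarz.
Qed.

Lemma eucl_normD x y : eucl_norm (x + y) <= eucl_norm x + eucl_norm y.
Proof.
have xy := le_trans (ler_norm _) (dot_le_eucl_norm x y).
rewrite -ler_sqr ?nnegrE ?addr_ge0 ?eucl_norm_ge0 //.
by rewrite sqr_eucl_norm norm2D -!sqr_eucl_norm; nra.
Qed.

Lemma eucl_norm_sum (I : Type) (s : seq I) (F : I -> 'rV_d) :
  eucl_norm (\sum_(i <- s) F i) <= \sum_(i <- s) eucl_norm (F i).
Proof.
elim: s => [|a s IH]; first by rewrite !big_nil eucl_norm0.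
by rewrite !big_cons; apply: le_trans (eucl_normD _ _) (lerD _ IH).
Qed.

End Dot.

Lemma submxB (F : fieldType) m1 m2 n (X Y : 'M[F]_(m1, n)) (A : 'M[F]_(m2, n)) :
  (X <= A)%MS -> (Y <= A)%MS -> (X - Y <= A)%MS.
Proof. by move=> XA YA; rewrite addmx_sub // eqmx_opp. Qed.

Section Residual.
Variable d : nat.
Implicit Types x y v : 'rV[R]_d.

Lemma dot_orth_submx n (A : 'M[R]_(n, d)) x v :
  x *m A^T = 0 -> (v <= A)%MS -> dot x v = 0.
Proof. by move=> xA /submxP[w ->]; rewrite /dot trmx_mul mulmxA xA mul0mx mxE. Qed.

Lemma trmx_sub_gram n (A : 'M[R]_(n, d)) : (A^T <= A *m A^T)%MS.
Proof.
have capA_ker0 : (A :&: kermx A^T)%MS = 0.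
  apply/eqP/rowV0P => v; rewrite sub_capmx => /andP[vA /sub_kermxP vAT].
  by apply/eqP; rewrite -norm2_eq0 /norm2 (dot_orth_submx vAT vA).
have rank_gram : \rank (A *m A^T) = \rank A^T.
  by have := mxrank_mul_ker A A^T; rewrite capA_ker0 mxrank0 addn0 mxrank_tr.
by have [_] := mxrank_leqif_sup (submxMl A A^T); rewrite rank_gram eqxx.
Qed.

(* [A^T (A A^T)^+ A] is the orthogonal projection onto the row space of [A],
   with [pinvmx] as generalized inverse; it is one even when the rows of [A]
   are dependent because [A^T <= A A^T] (lemma [trmx_sub_gram]). *)
Definition resid n (A : 'M[R]_(n, d)) x : 'rV_d :=
  x *m (1%:M - A^T *m pinvmx (A *m A^T) *m A).

Lemma residD n (A : 'M[R]_(n, d)) x y : resid A (x + y) = resid A x + resid A y.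
Proof. exact: mulmxDl. Qed.

Lemma residB n (A : 'M[R]_(n, d)) x y : resid A (x - y) = resid A x - resid A y.
Proof. exact: mulmxBl. Qed.

Lemma residZ n (A : 'M[R]_(n, d)) a x : resid A (a *: x) = a *: resid A x.
Proof. by rewrite /resid scalemxAl. Qed.

Lemma resid_sum n (A : 'M[R]_(n, d)) (I : Type) (s : seq I) (F : I -> 'rV_d) :
  resid A (\sum_(i <- s) F i) = \sum_(i <- s) resid A (F i).
Proof. exact: mulmx_suml. Qed.

Lemma resid_compl_sub n (A : 'M[R]_(n, d)) x : (x - resid A x <= A)%MS.
Proof. by rewrite /resid mulmxBr mulmx1 subKr !mulmxA submxMl. Qed.

Lemma resid_orth n (A : 'M[R]_(n, d)) x : resid A x *m A^T = 0.
Proof.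
rewrite /resid mulmxBr mulmx1 mulmxBl.
have -> : x *m (A^T *m pinvmx (A *m A^T) *m A) *m A^T =
          x *m A^T *m pinvmx (A *m A^T) *m (A *m A^T) by rewrite !mulmxA.
rewrite mulmxKpV ?subrr //.
exact: submx_trans (submxMl _ _) (trmx_sub_gram A).
Qed.

Lemma dot_resid_submx n (A : 'M[R]_(n, d)) x v : (v <= A)%MS -> dot (resid A x) v = 0.
Proof. exact/dot_orth_submx/resid_orth. Qed.

Lemma residP n (A : 'M[R]_(n, d)) x r :
  (x - r <= A)%MS -> r *m A^T = 0 -> resid A x = r.
Proof.
move=> xrA rA; apply/eqP; rewrite -subr_eq0 -norm2_eq0.
have diffA : (resid A x - r <= A)%MS.
  have -> : resid A x - r = (x - r) - (x - resid A x).
    by rewrite [RHS]addrC opprB addrA subrK.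
  exact: submxB xrA (resid_compl_sub A x).
by rewrite /norm2 {1}dotBl (dot_orth_submx rA diffA) dot_resid_submx ?subrr.
Qed.

Lemma resid_id n (A : 'M[R]_(n, d)) x : x *m A^T = 0 -> resid A x = x.
Proof. by move=> xA; apply: residP; rewrite // subrr sub0mx. Qed.

Lemma resid_min n (A : 'M[R]_(n, d)) x v :
  (v <= A)%MS -> norm2 (resid A x) <= norm2 (x - v).
Proof.
move=> vA; have -> : x - v = resid A x + ((x - resid A x) - v).
  by rewrite addrA subrKC.
rewrite norm2_pyth ?lerDl ?norm2_ge0 //.
exact/dot_resid_submx/submxB/vA/resid_compl_sub.
Qed.

Lemma norm2_resid_le n (A : 'M[R]_(n, d)) x : norm2 (resid A x) <= norm2 x.
Proof. by have := resid_min x (sub0mx 1 A); rewrite subr0. Qed.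

Lemma norm2_resid_antimono m n (A : 'M[R]_(m, d)) (B : 'M[R]_(n, d)) x :
  (A <= B)%MS -> norm2 (resid B x) <= norm2 (resid A x).
Proof.
move=> AB; have := resid_min x (submx_trans (resid_compl_sub A x) AB).
by rewrite subKr.
Qed.

Local Open Scope classical_set_scope.

Lemma distE x (C : seq 'rV[R]_d) : dist x C = eucl_norm (resid (mx_of C) x).
Proof.
rewrite /dist; set E := (X in inf X); set r := eucl_norm _.
have r_lb : lbound E r.
  by move=> _ [v vC <-]; rewrite ler_eucl_norm; apply: resid_min.
have Er : E r by exists (x - resid (mx_of C) x); rewrite /= ?resid_compl_sub // subKr.
apply/le_anti/andP; split; first by apply: ge_inf => //; exists r.
by apply: lb_le_inf => //; exists r.
Qed.

End Residual.

Section Transvection.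
Variable F : comNzRingType.

Lemma delta_mulmxE m n (j : 'I_m) (v : 'rV[F]_n) a b :
  (delta_mx j 0 *m v) a b = (a == j)%:R * v 0 b.
Proof. by rewrite mxE big_ord1 !mxE andbT. Qed.

Lemma row_delta_mulmx m n (j a : 'I_m) (v : 'rV[F]_n) :
  row a (delta_mx j 0 *m v) = (a == j)%:R *: v.
Proof. by apply/rowP => k; rewrite mxE delta_mulmxE mxE. Qed.

Lemma row'_delta_mulmx m n (j : 'I_m.+1) (v : 'rV[F]_n) :
  row' j (delta_mx j 0 *m v) = 0.
Proof.
apply/matrixP => a k; rewrite mxE delta_mulmxE (eq_sym _ j).
by rewrite (negPf (neq_lift j a)) mul0r mxE.
Qed.

Lemma det_transvection n (j : 'I_n) (u : 'rV[F]_n) :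
  u 0 j = 0 -> \det (1%:M - delta_mx j 0 *m u) = 1.
Proof.
set E := _ - _ => uj0.
have EE a b : E a b = (a == b)%:R - (a == j)%:R * u 0 b.
  by rewrite 3!mxE delta_mulmxE.
rewrite (expand_det_col E j) (bigD1 j) //= big1 ?addr0 => [|a /negPf aj].
  rewrite /cofactor EE uj0 mulr0 subr0 eqxx mul1r -signr_odd addnn odd_double.
  have -> : row' j (col' j E) = 1%:M.
    apply/matrixP => a b; rewrite 2!mxE EE (eq_sym _ j) (negPf (neq_lift j a)) mul0r.
    by rewrite subr0 (inj_eq (@lift_inj _ j)) mxE.
  by rewrite det1 mul1r.
by rewrite EE uj0 mulr0 subr0 aj mul0r.
Qed.

End Transvection.

Section Gram.
Variable d : nat.

Definition gram m (M : 'M[R]_(m, d)) := M *m M^T.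

Lemma row_sub_row' n (M : 'M[R]_(n.+1, d)) j b : b != j -> (row b M <= row' j M)%MS.
Proof.
case: (unliftP j b) => [i ->|->]; rewrite ?eqxx // => _.
by apply: (eq_row_sub i); apply/rowP => k; rewrite !mxE.
Qed.

Lemma det_gram_orth_row n (M : 'M[R]_(n.+1, d)) j :
  row j M *m (row' j M)^T = 0 ->
  \det (gram M) = norm2 (row j M) * \det (gram (row' j M)).
Proof.
move=> orth_j; rewrite (expand_det_row _ j) (bigD1 j) //= big1 ?addr0 => [|b bj].
  rewrite /cofactor -signr_odd addnn odd_double mul1r /gram mulmx_trE.
  by congr (_ * \det _); apply/matrixP => a b; rewrite !mxE; apply: eq_bigr => k; rewrite !mxE.
by rewrite /gram mulmx_trE (dot_orth_submx orth_j (row_sub_row' M bj)) mul0r.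
Qed.

Lemma det_gram_shift_row n (M : 'M[R]_(n.+1, d)) j (v : 'rV[R]_d) :
  (v <= row' j M)%MS -> \det (gram (M - delta_mx j 0 *m v)) = \det (gram M).
Proof.
case/submxP=> w ->; set u := w *m row' j 1%:M.
have -> : M - delta_mx j 0 *m (w *m row' j M) = (1%:M - delta_mx j 0 *m u) *m M.
  by rewrite mulmxBl mul1mx -!mulmxA row'Esub -rowsubE.
have uj0 : u 0 j = 0.
  by rewrite mxE big1 // => i _; rewrite !mxE (eq_sym _ j) (negPf (neq_lift j i)) mulr0.
rewrite /gram trmx_mul mulmxA -(mulmxA _ M) !det_mulmx det_tr det_transvection //.
by rewrite mul1r mulr1.
Qed.

Lemma det_gram_resid n (M : 'M[R]_(n.+1, d)) j :
  \det (gram M) = norm2 (resid (row' j M) (row j M)) * \det (gram (row' j M)).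
Proof.
set A := row' j M; set r := resid A (row j M).
have vA : (row j M - r <= A)%MS by apply: resid_compl_sub.
rewrite -(det_gram_shift_row vA); set M' := _ - _.
have rowM'j : row j M' = r by rewrite linearB /= row_delta_mulmx eqxx scale1r subKr.
have row'M' : row' j M' = A by rewrite linearB /= row'_delta_mulmx subr0.
by rewrite (@det_gram_orth_row _ _ j) rowM'j row'M' // resid_orth.
Qed.

Lemma det_gram_ge0 m (M : 'M[R]_(m, d)) : 0 <= \det (gram M).
Proof.
elim: m M => [|m IH] M; first by rewrite det_mx00.
by rewrite (det_gram_resid M ord0) mulr_ge0 ?norm2_ge0.
Qed.

End Gram.

Section ResidNorm.
Variables (d n : nat) (H : 'M[R]_(n, d)).
Implicit Types x y : 'rV[R]_d.

Lemma eucl_norm_residD x y :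
  eucl_norm (resid H (x + y)) <= eucl_norm (resid H x) + eucl_norm (resid H y).
Proof. by rewrite residD eucl_normD. Qed.

Lemma eucl_norm_residB x y :
  eucl_norm (resid H (x - y)) <= eucl_norm (resid H x) + eucl_norm (resid H y).
Proof. by rewrite residB -(eucl_normN (resid H y)) eucl_normD. Qed.

Lemma eucl_norm_residZ a x : eucl_norm (resid H (a *: x)) = `|a| * eucl_norm (resid H x).
Proof. by rewrite residZ eucl_normZ. Qed.

Lemma eucl_norm_resid_sum (I : Type) (s : seq I) (F : I -> 'rV_d) :
  eucl_norm (resid H (\sum_(i <- s) F i)) <= \sum_(i <- s) eucl_norm (resid H (F i)).
Proof. by rewrite resid_sum eucl_norm_sum. Qed.

End ResidNorm.

Section OrthFamily.
Variables (d n : nat) (H : 'M[R]_(n, d)) (U : 'M[R]_(n.+1, d)).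
Hypothesis U_orth : forall i j, i != j -> dot (row i U) (row j U) = 0.

Lemma exists_comb_orth : exists2 b : 'rV[R]_n.+1, b != 0 & b *m U *m H^T = 0.
Proof.
have /rowV0Pn[b /sub_kermxP bK b0] : kermx (U *m H^T) != 0.
  by rewrite -mxrank_eq0 mxrank_ker subn_eq0 -ltnNge ltnS rank_leq_col.
by exists b; rewrite // -mulmxA.
Qed.

Lemma norm2_comb_orth (b : 'rV[R]_n.+1) :
  norm2 (b *m U) = \sum_i b 0 i ^+ 2 * norm2 (row i U).
Proof.
rewrite mulmx_sum_row /norm2 dot_suml; apply: eq_bigr => i _.
rewrite dotZl dot_sumr (bigD1 i) //= big1 ?addr0 => [|j ji].
  by rewrite dotZr mulrA expr2.
by rewrite dotZr U_orth ?mulr0 // eq_sym.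
Qed.

Lemma orth_family_resid_bound j0 B :
  (forall i, norm2 (row j0 U) <= norm2 (row i U)) ->
  (forall i, eucl_norm (resid H (row i U)) <= B) ->
  eucl_norm (row j0 U) <= n.+1%:R * B.
Proof.
move=> j0_min resid_le; have [b b0 bUH] := exists_comb_orth.
have [i1 _ i1_max] := arg_maxP (fun i => `|b 0 i|) (isT : predT j0).
set bm := `|b 0 i1|.
have bm_gt0 : 0 < bm.
  have [k bk0] : exists k, b 0 k != 0.
    apply/existsP; apply: contraR b0 => /existsPn b_eq0.
    by apply/eqP/rowP => k; rewrite mxE; apply/eqP/negPn.
  by apply: lt_le_trans (i1_max k isT); rewrite normr_gt0.
have lower : bm * eucl_norm (row j0 U) <= eucl_norm (b *m U).
  rewrite -(ger0_norm (ltW bm_gt0)) -eucl_normZ ler_eucl_norm norm2Z norm2_comb_orth.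
  rewrite (bigD1 i1) //= -[X in X <= _]addr0 lerD ?sumr_ge0 // => [|i _].
    by rewrite /bm real_normK ?num_real // ler_wpM2l ?sqr_ge0.
  by rewrite mulr_ge0 ?sqr_ge0 ?norm2_ge0.
have upper : eucl_norm (b *m U) <= n.+1%:R * (bm * B).
  rewrite -(resid_id bUH) mulmx_sum_row.
  apply: le_trans (eucl_norm_resid_sum _ _ _) _.
  have -> : n.+1%:R * (bm * B) = \sum_(i < n.+1) bm * B.
    by rewrite sumr_const card_ord mulr_natl.
  apply: ler_sum => i _.
  by rewrite eucl_norm_residZ ler_pM ?normr_ge0 ?eucl_norm_ge0 ?resid_le //; apply: i1_max.
by move: (le_trans lower upper); rewrite mulrCA ler_pM2l.
Qed.

End OrthFamily.

Section Spans.
Variable d : nat.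
Implicit Types (s : seq 'rV[R]_d) (x r : 'rV[R]_d).

Lemma row_mx_of s (i : 'I_(size s)) : row i (mx_of s) = nth 0 s i.
Proof. by apply/rowP => k; rewrite !mxE. Qed.

Lemma mem_mx_of s x : x \in s -> (x <= mx_of s)%MS.
Proof.
rewrite -index_mem => xs; apply: (eq_row_sub (Ordinal xs)).
by rewrite row_mx_of nth_index // -index_mem.
Qed.

Lemma mx_of_subP m s (B : 'M_(m, d)) :
  {subset s <= [pred x | (x <= B)%MS]} -> (mx_of s <= B)%MS.
Proof. by move=> sB; apply/row_subP => i; rewrite row_mx_of; apply/sB/mem_nth. Qed.

Lemma orth_mx_of s r : {in s, forall x, dot r x = 0} -> r *m (mx_of s)^T = 0.
Proof.
move=> rs; apply/rowP => i; rewrite mulmx_trE row_mx_of mxE.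
by rewrite -(rs _ (mem_nth 0 (ltn_ord i))); congr dot; apply/rowP => k; rewrite mxE.
Qed.

Lemma resid_mx_of_nil x : resid (mx_of [::]) x = x.
Proof. exact/resid_id/thinmx0. Qed.

Lemma mx_of_take_mono s i j : (j <= i)%N -> (mx_of (take j s) <= mx_of (take i s))%MS.
Proof.
by move=> ji; apply: mx_of_subP => x; rewrite -(take_takel _ ji) => /mem_take/mem_mx_of.
Qed.

Lemma nth_sub_mx_of_take s i j : (j < i)%N -> (j < size s)%N ->
  (nth 0 s j <= mx_of (take i s))%MS.
Proof.
move=> ji js; apply: submx_trans (mx_of_take_mono s ji).
by apply: mem_mx_of; rewrite (take_nth 0 js) mem_rcons mem_head.
Qed.

End Spans.

Section GramSchmidt.
Variables (d : nat) (G : seq 'rV[R]_d).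

Definition gram_schmidt i := resid (mx_of (take i G)) (nth 0 G i).

(* [gs_coef q j = 0] when [gram_schmidt j = 0], since [x / 0 = 0]. *)
Definition gs_coef q j :=
  dot (resid (mx_of (take j G)) q) (gram_schmidt j) / norm2 (gram_schmidt j).

Lemma gram_schmidt_sub i j : (j < i)%N -> (j < size G)%N ->
  (gram_schmidt j <= mx_of (take i G))%MS.
Proof.
move=> ji jG; rewrite /gram_schmidt -[resid _ _](subKr (nth 0 G j)).
apply: submxB; first exact: nth_sub_mx_of_take.
exact: submx_trans (resid_compl_sub _ _) (mx_of_take_mono _ (ltnW ji)).
Qed.

Lemma gram_schmidt_orth i j : (i < size G)%N -> (j < size G)%N -> i != j ->
  dot (gram_schmidt i) (gram_schmidt j) = 0.
Proof.
move=> iG jG; case: (ltngtP i j) => // [ij|ji] _; last first.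
  exact/dot_resid_submx/gram_schmidt_sub.
by rewrite dotC; apply/dot_resid_submx/gram_schmidt_sub.
Qed.

Lemma resid_take_succ q j : (j < size G)%N ->
  resid (mx_of (take j G)) q =
  gs_coef q j *: gram_schmidt j + resid (mx_of (take j.+1 G)) q.
Proof.
move=> jG; set r := resid _ q; set u := gram_schmidt j.
suff -> : resid (mx_of (take j.+1 G)) q = r - gs_coef q j *: u by rewrite subrKC.
have r'_orth v : (v <= mx_of (take j G))%MS -> dot (r - gs_coef q j *: u) v = 0.
  by move=> vG; rewrite dotBl dotZl !dot_resid_submx // mulr0 subr0.
apply: residP.
  rewrite opprB addrCA addmx_sub ?scalemx_sub ?gram_schmidt_sub //.
  exact: submx_trans (resid_compl_sub _ _) (mx_of_take_mono _ (leqnSn j)).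
apply: orth_mx_of => x; rewrite (take_nth 0 jG) mem_rcons inE.
case/predU1P=> [->|/mem_mx_of]; last exact: r'_orth.
rewrite -(subrK u (nth 0 G j)) dotDr r'_orth ?resid_compl_sub // add0r dotBl dotZl.
have [u0|u_neq0] := eqVneq u 0; first by rewrite u0 !dot0r mulr0 subr0.
by rewrite /gs_coef -/u divfK ?subrr // norm2_eq0.
Qed.

Lemma gram_schmidt_decomp q m : (m <= size G)%N ->
  q = \sum_(j < m) gs_coef q j *: gram_schmidt j + resid (mx_of (take m G)) q.
Proof.
elim: m => [|m IH] mG; first by rewrite big_ord0 add0r take0 resid_mx_of_nil.
by rewrite big_ord_recr /= -addrA -resid_take_succ // -IH // ltnW.
Qed.

End GramSchmidt.

Section Greedy.
Variables (d n : nat) (P G : seq 'rV[R]_d).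
Hypotheses (G_greedy : is_greedy P n.+1 G) (G_size : size G = n.+1).

Let u := gram_schmidt G.

Lemma mem_greedy i : (i < n.+1)%N -> nth 0 G i \in P.
Proof. by move=> i_lt; have [_ /(_ i)[]] := G_greedy; rewrite ?G_size. Qed.

Lemma greedy_max i q : (i < n.+1)%N -> q \in P ->
  norm2 (resid (mx_of (take i G)) q) <= norm2 (u i).
Proof.
move=> i_lt qP; have [_ /(_ i)[|_ /(_ q qP)]] := G_greedy; first by rewrite G_size.
by rewrite !distE ler_eucl_norm.
Qed.

Lemma norm2_gram_schmidt_antimono i j : (i <= j)%N -> (j < n.+1)%N ->
  norm2 (u j) <= norm2 (u i).
Proof.
move=> ij j_lt; apply: le_trans (greedy_max (leq_ltn_trans ij j_lt) (mem_greedy j_lt)).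
exact/norm2_resid_antimono/mx_of_take_mono.
Qed.

Lemma gs_coef_le1 q j : (j < n.+1)%N -> q \in P -> `|gs_coef G q j| <= 1.
Proof.
move=> j_lt qP; rewrite /gs_coef -/u.
have [u0|u_neq0] := eqVneq (u j) 0; first by rewrite u0 /norm2 !dot0r mul0r normr0.
have u_gt0 : 0 < norm2 (u j) by rewrite lt_def norm2_eq0 u_neq0 norm2_ge0.
rewrite normrM normfV (ger0_norm (norm2_ge0 _)) ler_pdivrMr // mul1r.
apply: le_trans (dot_le_eucl_norm _ _) _.
by rewrite -sqr_eucl_norm expr2 ler_wpM2r ?eucl_norm_ge0 // ler_eucl_norm greedy_max.
Qed.

Variable H : 'M[R]_(n, d).
Let h x := eucl_norm (resid H x).

Lemma gs_comb_bound q m (B : nat -> R) : q \in P -> (m <= n.+1)%N ->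
  (forall j, (j < m)%N -> h (u j) <= B j) ->
  h (\sum_(j < m) gs_coef G q j *: u j) <= \sum_(j < m) B j.
Proof.
move=> qP m_le uB; apply: le_trans (eucl_norm_resid_sum _ _ _) (ler_sum _ _) => j _.
rewrite eucl_norm_residZ -[leRHS]mul1r ler_pM ?normr_ge0 ?eucl_norm_ge0 ?uB //.
exact: gs_coef_le1 (leq_trans (ltn_ord j) m_le) qP.
Qed.

Section MaxResid.
Variable Mx : R.
Hypothesis G_resid_le : forall t, (t < n.+1)%N -> h (nth 0 G t) <= Mx.

Lemma gram_schmidt_resid_bound i : (i < n.+1)%N -> h (u i) <= 2 ^+ i * Mx.
Proof.
elim/ltn_ind: i => i IH i_lt.
have -> : u i = nth 0 G i - \sum_(j < i) gs_coef G (nth 0 G i) j *: u j.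
  rewrite {1}(@gram_schmidt_decomp _ G (nth 0 G i) i) ?G_size 1?ltnW //.
  by rewrite addrAC subrr add0r.
apply: le_trans (eucl_norm_residB _ _ _) _.
have sum_le := gs_comb_bound (mem_greedy i_lt) (ltnW i_lt)
  (fun j ji => IH j ji (ltn_trans ji i_lt)).
have geom : \sum_(j < i) (2 : R) ^+ j = 2 ^+ i - 1.
  by rewrite subrX1 (_ : 2 - 1 = 1 :> R) ?mul1r //; lra.
rewrite -mulr_suml geom in sum_le.
rewrite (_ : 2 ^+ i * Mx = Mx + (2 ^+ i - 1) * Mx); last by ring.
exact: lerD (G_resid_le i_lt) sum_le.
Qed.

Lemma gram_schmidt_resid_le i : (i < n.+1)%N -> h (u i) <= 2 ^+ n * Mx.
Proof.
move=> i_lt; apply: le_trans (gram_schmidt_resid_bound i_lt) _.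
have Mx_ge0 : 0 <= Mx := le_trans (eucl_norm_ge0 _) (G_resid_le (ltn0Sn n)).
by rewrite ler_wpM2r // ler_eXn2l // ?ltr1n.
Qed.

Lemma last_gram_schmidt_bound : eucl_norm (u n) <= n.+1%:R * (2 ^+ n * Mx).
Proof.
pose U := \matrix_(i < n.+1) u i.
have rowU i : row i U = u i by rewrite rowK.
have := @orth_family_resid_bound d n H U _ ord_max (2 ^+ n * Mx).
rewrite rowU; apply=> [i j ij|i|i]; rewrite !rowU.
- by apply: gram_schmidt_orth; rewrite ?G_size.
- exact: norm2_gram_schmidt_antimono (leq_ord i) (ltnSn n).
- exact: gram_schmidt_resid_le.
Qed.

End MaxResid.

Lemma greedy_resid_bound q : q \in P ->
  exists2 t, (t < n.+1)%N & h q <= n.+1%:R * 2 ^+ n.+1 * h (nth 0 G t).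
Proof.
move=> qP.
have [t _ t_max] := arg_maxP (fun t : 'I_n.+1 => h (nth 0 G t)) (isT : predT ord0).
exists t => //; set Mx := h (nth 0 G t).
have G_le s (s_lt : (s < n.+1)%N) : h (nth 0 G s) <= Mx := t_max (Ordinal s_lt) isT.
rewrite (@gram_schmidt_decomp _ G q n.+1) ?G_size //.
apply: le_trans (eucl_norm_residD _ _ _) _.
have sum_le := gs_comb_bound qP (leqnn _) (fun j => gram_schmidt_resid_le G_le (i:=j)).
rewrite sumr_const card_ord in sum_le.
have r_le : h (resid (mx_of (take n.+1 G)) q) <= n.+1%:R * (2 ^+ n * Mx).
  apply: le_trans (last_gram_schmidt_bound G_le); rewrite /h ler_eucl_norm.
  apply: le_trans (norm2_resid_le _ _) _; apply: le_trans (greedy_max (ltnSn n) qP).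
  exact/norm2_resid_antimono/mx_of_take_mono.
have -> : n.+1%:R * 2 ^+ n.+1 * Mx = (2 ^+ n * Mx) *+ n.+1 + n.+1%:R * (2 ^+ n * Mx).
  by rewrite exprS -mulr_natl; ring.
exact: lerD sum_le r_le.
Qed.

End Greedy.

Section Maxdet.
Variables (d k : nat).

Lemma maxdet_ge0 (U : seq 'rV[R]_d) : 0 <= MAXDET k U.
Proof. exact: bigmax_ge_id. Qed.

Lemma maxdet_le (U : seq 'rV[R]_d) X : 0 <= X ->
  (forall M : 'M[R]_(k, d), (forall a, row a M \in U) -> \det (gram M) <= X) ->
  MAXDET k U <= X.
Proof.
move=> X_ge0 U_le; apply: bigmax_le => // f _; apply: U_le => a.
by rewrite rowK -mem_undup mem_nth.
Qed.

Lemma det_gram_eq_row m (M : 'M[R]_(m, d)) a b :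
  a != b -> row a M = row b M -> \det (gram M) = 0.
Proof.
move=> ab Mab; apply: (determinant_alternate ab) => j.
by rewrite /gram !mulmx_trE Mab.
Qed.

Lemma maxdet_ge (U : seq 'rV[R]_d) (M : 'M[R]_(k, d)) :
  (forall a, row a M \in U) -> \det (gram M) <= MAXDET k U.
Proof.
move=> MU; have [/injectiveP rows_inj|/injectivePn[a [b ab Mab]]] :=
  boolP (injectiveb (fun a : 'I_k => row a M)); last first.
  by rewrite (det_gram_eq_row ab Mab) maxdet_ge0.
have idx a : (index (row a M) (undup U) < size (undup U))%N by rewrite index_mem mem_undup.
pose f := [ffun a => Ordinal (idx a)].
have f_inj : injectiveb f.
  apply/injectiveP => a b; rewrite !ffunE => -[] /(congr1 (nth 0 (undup U))).
  by rewrite !nth_index ?mem_undup // => /rows_inj.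
have -> : M = \matrix_(i < k, j < d) (nth 0 (undup U) (f i)) 0 j.
  by apply/matrixP => a j; rewrite !mxE ffunE nth_index ?mem_undup // mxE.
by rewrite /MAXDET /gram /=; apply: le_bigmax_cond.
Qed.

End Maxdet.

Definition set_row (T : Type) d m (M : 'M[T]_(m, d)) a (g : 'rV[T]_d) :=
  \matrix_b (if b == a then g else row b M).

Lemma row_set_row (T : Type) d m (M : 'M[T]_(m, d)) a g b :
  row b (set_row M a g) = if b == a then g else row b M.
Proof. exact: rowK. Qed.

Lemma row'_set_row (T : Type) d n (M : 'M[T]_(n.+1, d)) a g :
  row' a (set_row M a g) = row' a M.
Proof.
apply/matrixP => i j; rewrite !mxE (eq_sym _ a) (negPf (neq_lift a i)).
by rewrite mxE.
Qed.

Definition greedy_factor n : R := n.+1%:R * 2 ^+ n.+1.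

Lemma greedy_factor_ge0 n : 0 <= greedy_factor n.
Proof. by rewrite mulr_ge0 ?exprn_ge0. Qed.

Section Replacement.
Variables (d n : nat) (c : seq 'rV[R]_d -> seq 'rV[R]_d) (U U' : seq 'rV[R]_d).
Hypothesis c_greedy : forall P, is_greedy P n.+1 (c P).
Hypothesis U_covered : forall x, x \in U -> exists2 P, x \in P & {subset c P <= U'}.

Lemma replace_row (M : 'M[R]_(n.+1, d)) a : row a M \in U ->
  exists2 g, g \in U' &
    \det (gram M) <= greedy_factor n ^+ 2 * \det (gram (set_row M a g)).
Proof.
case/U_covered=> P xP cPU'; have [size_cP _] := c_greedy P.
have {size_cP} size_cP : size (c P) = n.+1 by move: size_cP; case: (P) xP.
have [t t_lt resid_le] := greedy_resid_bound (c_greedy P) size_cP (row' a M) xP.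
exists (nth 0 (c P) t); first by rewrite cPU' ?mem_nth ?size_cP.
rewrite (det_gram_resid M a) (det_gram_resid _ a) row'_set_row row_set_row eqxx.
rewrite mulrA ler_wpM2r ?det_gram_ge0 // -!sqr_eucl_norm -exprMn.
by rewrite lerXn2r ?nnegrE ?(mulr_ge0 (greedy_factor_ge0 n)) ?eucl_norm_ge0.
Qed.

Lemma replace_rows p (M : 'M[R]_(n.+1, d)) : (p <= n.+1)%N ->
  (forall a : 'I_n.+1, (a < p)%N -> row a M \in U) ->
  (forall a : 'I_n.+1, (p <= a)%N -> row a M \in U') ->
  exists2 M' : 'M[R]_(n.+1, d), (forall a, row a M' \in U') &
    \det (gram M) <= greedy_factor n ^+ (2 * p) * \det (gram M').
Proof.
elim: p M => [|p IH] M p_lt MU MU'.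
  by exists M => [a|]; rewrite ?MU' // mul1r.
pose a := Ordinal p_lt.
have [g gU' detM] := replace_row (MU a (ltnSn p)).
have [b b_lt|b b_ge|M' M'U' detM'] := IH (set_row M a g) (ltnW p_lt).
- rewrite row_set_row; case: eqP => [ba|_]; last exact/MU/ltnW.
  by move: b_lt; rewrite ba ltnn.
- rewrite row_set_row; case: eqP => // /eqP ba; apply: MU'.
  by rewrite ltn_neqAle eq_sym b_ge andbT.
exists M' => //; apply: le_trans detM _.
by rewrite mulnS exprD -mulrA ler_wpM2l ?exprn_ge0 ?greedy_factor_ge0.
Qed.

Lemma maxdet_replace_greedy :
  MAXDET n.+1 U <= greedy_factor n ^+ (2 * n.+1) * MAXDET n.+1 U'.
Proof.
have C_ge0 := exprn_ge0 (2 * n.+1) (greedy_factor_ge0 n).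
apply: maxdet_le => [|M MU]; first by rewrite mulr_ge0 ?maxdet_ge0.
have [a _|a|M' M'U' detM] := replace_rows (leqnn n.+1) (M := M); first exact: MU.
  by rewrite leqNgt ltn_ord.
by apply: le_trans detM _; rewrite ler_wpM2l ?maxdet_ge.
Qed.

End Replacement.

Lemma greedy_factor_le n : greedy_factor n <= 4 ^+ n.+1.
Proof.
have -> : (4 : R) = 2 * 2 by lra.
rewrite /greedy_factor exprMn ler_wpM2r ?exprn_ge0 //.
by rewrite -natrX ler_nat ltnW // ltn_expl.
Qed.

Lemma greedy_factor_expn_le n : greedy_factor n ^+ (2 * n.+1) <= 16 ^+ (n.+1 ^ 2).
Proof.
apply: le_trans (lerXn2r _ _ _ (greedy_factor_le n)) _;
  rewrite ?nnegrE ?greedy_factor_ge0 ?exprn_ge0 //.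
have -> : (16 : R) = 4 ^+ 2 by lra.
by rewrite -!exprM mulnCA.
Qed.

Lemma flatten_map_cover (T I : eqType) (r : seq I) (Ps : I -> seq T) (c : seq T -> seq T) x :
  x \in flatten [seq Ps i | i <- r] ->
  exists2 P, x \in P & {subset c P <= flatten [seq c (Ps i) | i <- r]}.
Proof.
case/flattenP=> _ /mapP[i ir ->] xP; exists (Ps i) => // y y_c.
by apply/flattenP; exists (c (Ps i)); rewrite ?map_f.
Qed.

Lemma greedy_size_undup d k (c : seq 'rV[R]_d -> seq 'rV[R]_d) P :
  is_greedy P k (c P) -> (size (undup (c P)) <= k)%N.
Proof. by case=> size_cP _; rewrite (leq_trans (size_undup _)) // size_cP; case: (P). Qed.

Theorem theorem1p1 :
  exists A C : R, 0 < A /\ 0 < C /\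
  forall (d k : nat), (1 <= k <= d)%N ->
  forall c : seq 'rV[R]_d -> seq 'rV[R]_d,
    (forall P, is_greedy P k (c P)) ->
    (forall P, (size (undup (c P)) <= k)%N) /\
    (forall (m : nat) (Ps : 'I_m -> seq 'rV[R]_d), (1 <= m)%N ->
       MAXDET k (flatten [seq c (Ps i) | i <- enum 'I_m]) >=
       (A * C ^+ (k ^ 2)%N)^-1 * MAXDET k (flatten [seq Ps i | i <- enum 'I_m])).
Proof.
exists 1, 16; do 2!split => //; move=> d [//|n] _ c c_greedy.
split=> [P|m Ps _]; first exact: greedy_size_undup.
rewrite mul1r ler_pdivrMl ?exprn_gt0 //.
apply: le_trans (maxdet_replace_greedy c_greedy (@flatten_map_cover _ _ _ Ps c)) _.
by rewrite ler_wpM2r ?maxdet_ge0 ?greedy_factor_expn_le.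
Qed.
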